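(* If $(T,R_T)$ is a rooted forest and $(F,R_F)\in \mathcal{L}(T)$, then $\rho(T,R_T)\le \rho(F,R_F)$.
   Context: A rooted graph $(F,R)$ is a graph $F$ with a set $R\subsetneq V(F)$ of roots; a rooted forest is a rooted graph whose graph is a forest. For $S\subseteq V(F)$, $e_S(F)$ is the number of edges of $F$ incident to a vertex of $S$, and $\rho(F,R)=\min_{\emptyset\ne S\subseteq V(F)\setminus R} e_S(F)/|S|$. For rooted graphs $(F,R),(F',R')$, a map $\phi:V(F)\to V(F')$ is a local isomorphism if (a) $\phi$ is surjective and $\phi(R)\subseteq R'$, (b) every edge $e\in E(F)$ has $\phi(e)\in E(F')$, and (c) every two distinct edges $e,f\in E(F)$ with $e\cap f\ne\emptyset$ satisfy $\phi(e)\ne\phi(f)$. $\mathcal{L}(T)$ denotes the set of rooted graphs $(F',R')$ such that there is a local isomorphism from $(T,R_T)$ to $(F',R')$. *)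

From HB Require Import structures.
From mathcomp Require Import all_boot all_order all_algebra.
Set Implicit Arguments. Unset Strict Implicit. Unset Printing Implicit Defensive.
Import Order.TTheory GRing.Theory Num.Theory.

Definition simple_graph (V : finType) (E : {set {set V}}) : Prop :=
  forall e, e \in E -> #|e| = 2.

Definition rooted_graph (V : finType) (E : {set {set V}}) (R : {set V}) : Prop :=
  simple_graph E /\ R \proper [set: V].

Definition adj (V : finType) (E : {set {set V}}) : rel V :=
  fun x y => (x != y) && ([set x; y] \in E).

Definition forest (V : finType) (E : {set {set V}}) : Prop :=
  forall s : seq V, uniq s -> 2 < size s -> ~~ cycle (adj E) s.

Definition eS (V : finType) (E : {set {set V}}) (S : {set V}) : nat :=
  #|[set e in E | e :&: S != set0]|.

Definition ratio (V : finType) (E : {set {set V}}) (S : {set V}) : rat :=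
  ((eS E S)%:R / (#|S|)%:R)%R.

(* rho(F,R) = min over nonempty S subset of V \ R of e_S/|S|.  The minimum is
   taken as a fold started at the candidate S = V \ R (nonempty as R is proper). *)
Definition rho (V : finType) (E : {set {set V}}) (R : {set V}) : rat :=
  \big[Num.min/ratio E (~: R)]_(S : {set V} | (S != set0) && (S \subset ~: R))
     ratio E S.

Definition local_iso (V V' : finType) (E : {set {set V}}) (R : {set V})
    (E' : {set {set V'}}) (R' : {set V'}) (phi : V -> V') : Prop :=
  [/\ (forall y : V', exists x : V, phi x = y) /\ (phi @: R \subset R'),
      (forall e, e \in E -> phi @: e \in E') &
      (forall e f, e \in E -> f \in E -> e != f -> e :&: f != set0 ->
         phi @: e != phi @: f)].

Definition in_L (V V' : finType) (E : {set {set V}}) (R : {set V})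
    (E' : {set {set V'}}) (R' : {set V'}) : Prop :=
  rooted_graph E' R' /\ exists phi : V -> V', local_iso E R E' R' phi.

(* Fix S inside V(F) \ R_F and let n(y) be the size of the fibre of y under
   the local isomorphism phi.  Giving each u in phi^-1(S) weight 1/n(phi u),
   the weights add up to |S|.  A layer-cake decomposition of these weights
   along the sets {u | n(phi u) <= k}, with rho(T) applied to every layer,
   yields rho(T) |S| <= sum_e 1/min{n(phi u) | u in e, phi u in S} over the
   edges e of T.  Since phi is injective on the edges at any vertex, for every
   y in an edge f of F at most n(y) edges of T lie over f, so the edges over f
   carry total weight at most 1 and the right-hand side is at most e_S(F). *)

From Pilot Require Import Defs.
From mathcomp Require Import all_boot all_order all_algebra ring.
Import Order.TTheory GRing.Theory Num.Theory.
Local Open Scope ring_scope.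

Definition harmonic_gap (K k : nat) : rat :=
  if (k < K)%N then k%:R^-1 - k.+1%:R^-1 else K%:R^-1.

Lemma harmonic_gap_ge0 K k : (0 < k)%N -> 0 <= harmonic_gap K k.
Proof.
move=> k_gt0; rewrite /harmonic_gap; case: ifP => _; last by rewrite invr_ge0.
by rewrite subr_ge0 lef_pV2 ?posrE ?ltr0n ?ler_nat.
Qed.

Lemma sum_harmonic_gap {K m : nat} : (0 < m <= K)%N ->
  \sum_(1 <= k < K.+1) (if (m <= k)%N then harmonic_gap K k else 0) = m%:R^-1.
Proof.
case/andP=> m_gt0 m_leK.
rewrite (big_cat_nat _ (n := m)) //= ?leqW // big1_seq => [|k]; last first.
  by rewrite mem_index_iota => /and3P[_ _ k_ltm]; rewrite leqNgt k_ltm.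
rewrite add0r big_nat_recr //= m_leK.
rewrite (@telescope_sumr_eq _ m K (fun k => - k%:R^-1)) //
    => [|k /andP[m_lek k_ltK]].
  by rewrite /harmonic_gap ltnn; ring.
by rewrite m_lek /harmonic_gap k_ltK; ring.
Qed.

Lemma sum_inv_card_fiber (T T' : finType) (g : T -> T') (A : {set T}) :
  \sum_(x in A) #|[set x' in A | g x' == g x]|%:R^-1 = #|g @: A|%:R :> rat.
Proof.
rewrite (partition_big g (fun y => y \in g @: A)) => [|x xA]; last first.
  exact: imset_f xA.
rewrite -sum1_card natr_sum; apply: eq_bigr => y /imsetP[x0 x0A ->].
set B := [set x in A | g x == g x0].
rewrite (eq_bigl (fun x => x \in B)) => [|x]; last by rewrite inE.
rewrite (eq_bigr (fun=> #|B|%:R^-1)) => [|x]; last first.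
  by rewrite inE => /andP[_ /eqP ->].
rewrite sumr_const -[_ *+ _]mulr_natl mulfV // pnatr_eq0 -lt0n card_gt0.
by apply/set0Pn; exists x0; rewrite inE x0A eqxx.
Qed.

Lemma sum_inv_layer_cake {T : finType} {U : {set T}} {m : T -> nat} {K : nat} :
  (forall u, u \in U -> 0 < m u <= K)%N ->
  \sum_(u in U) (m u)%:R^-1 =
  \sum_(1 <= k < K.+1) harmonic_gap K k * #|[set u in U | m u <= k]%N|%:R.
Proof.
move=> m_bounded.
rewrite (eq_bigr _ (fun u uU => esym (sum_harmonic_gap (m_bounded u uU)))).
rewrite exchange_big /=; apply: eq_bigr => k _.
rewrite -big_mkcondr /= sumr_const mulr_natr; congr (_ *+ _).
by apply: eq_card => u; rewrite inE.
Qed.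

Section Density.

Variables (V : finType) (E : {set {set V}}) (R : {set V}).

Lemma rho_le_ratio (S : {set V}) :
  S != set0 -> S \subset ~: R -> rho E R <= Defs.ratio E S.
Proof.
by move=> S_n0 S_free; rewrite /rho (bigD1 S) ?S_n0 //= ge_min lexx.
Qed.

Lemma rho_attained : R \proper [set: V] ->
  exists S, [/\ S != set0, S \subset ~: R & rho E R = Defs.ratio E S].
Proof.
move=> R_proper; rewrite /rho.
elim/big_ind: _ => [| x y [S [? ? ->]] [S' [? ? ->]] | S /andP[? ?]].
- exists (~: R); split=> //; case/properP: R_proper => _ [x _ xNR].
  by apply/set0Pn; exists x; rewrite in_setC.
- by rewrite minEle; case: ifP => _; [exists S | exists S'].
- by exists S.
Qed.

Lemma rho_mul_card_le_eS (S : {set V}) :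
  S \subset ~: R -> rho E R * #|S|%:R <= (eS E S)%:R.
Proof.
move=> S_free; have [->|S_n0] := eqVneq S set0; first by rewrite cards0 mulr0.
by rewrite -ler_pdivlMr ?ltr0n ?card_gt0 //; apply: rho_le_ratio.
Qed.

Lemma rho_mul_sum_inv_le (U : {set V}) (m : V -> nat) (b : {set V} -> rat) :
    U \subset ~: R -> (forall u, u \in U -> 0 < m u)%N ->
    (forall e, e \in E -> 0 <= b e) ->
    (forall e u, e \in E -> u \in e -> u \in U -> (m u)%:R^-1 <= b e) ->
  rho E R * \sum_(u in U) (m u)%:R^-1 <= \sum_(e in E) b e.
Proof.
move=> U_free m_gt0 b_ge0 b_ge.
set K := \max_(u in U) m u; pose L k := [set u in U | m u <= k]%N.
have m_bounded u : u \in U -> (0 < m u <= K)%N.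
  by move=> uU; rewrite m_gt0 //; apply: leq_bigmax_cond.
have edge_le e : e \in E ->
    \sum_(1 <= k < K.+1) (if e :&: L k != set0 then harmonic_gap K k else 0)
    <= b e.
  move=> eE; have [eU0|/set0Pn[u1 u1eU]] := eqVneq (e :&: U) set0.
    rewrite big1 ?b_ge0 // => k _; case: ifP => // /set0Pn[u].
    rewrite !inE => /and3P[ue uU _].
    by have := in_setI u e U; rewrite eU0 in_set0 ue uU.
  case: (arg_minnP m u1eU) => u0 /setIP[u0e u0U] u0_min.
  rewrite (eq_big_nat _ _ (F2 := fun k =>
    if (m u0 <= k)%N then harmonic_gap K k else 0)) => [|k _].
    by rewrite sum_harmonic_gap ?m_bounded ?b_ge.
  congr (if _ then _ else _); apply/set0Pn/idP => [[u]|u0k].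
    rewrite !inE => /and3P[ue uU /(leq_trans _)-> //].
    by apply: u0_min; apply/setIP.
  by exists u0; rewrite !inE u0e u0U.
have eS_layers :
    \sum_(1 <= k < K.+1) harmonic_gap K k * (eS E (L k))%:R =
    \sum_(e in E) \sum_(1 <= k < K.+1)
      (if e :&: L k != set0 then harmonic_gap K k else 0).
  rewrite exchange_big /=; apply: eq_bigr => k _.
  rewrite -big_mkcondr /= sumr_const mulr_natr; congr (_ *+ _).
  by apply: eq_card => e; rewrite inE.
rewrite (sum_inv_layer_cake m_bounded) big_distrr /=.
apply: le_trans (ler_sum _ edge_le); rewrite -eS_layers.
apply: ler_sum_nat => k /andP[k_gt0 _]; rewrite mulrCA.
apply: ler_wpM2l; first exact: harmonic_gap_ge0.
apply/rho_mul_card_le_eS/subset_trans/U_free.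
by apply/subsetP => u; rewrite inE => /andP[].
Qed.

End Density.

Lemma card_edge_fiber_le (V W : finType) (E : {set {set V}}) (phi : V -> W)
    (f : {set W}) (y : W) :
    (forall e e', e \in E -> e' \in E -> e != e' -> e :&: e' != set0 ->
       phi @: e != phi @: e') ->
    y \in f -> (#|[set e in E | phi @: e == f]| <= #|[set u | phi u == y]|)%N.
Proof.
move=> phi_inj yf; pose h (e : {set V}) := [pick u in e | phi u == y].
have h_fiber e : e \in [set e in E | phi @: e == f] ->
    exists2 u, h e = Some u & (u \in e) && (phi u == y).
  rewrite inE => /andP[_ /eqP phi_e]; rewrite /h; case: pickP => [u ?|none].
    by exists u.
  move: yf; rewrite -phi_e => /imsetP[u ue yE].
  by move: (none u); rewrite ue yE eqxx.
rewrite -(card_in_imset (f := h)) => [|e e'].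
  rewrite -[X in (_ <= X)%N](card_imset _ (@Some_inj _)).
  apply/subset_leq_card/subsetP => x.
  by case/imsetP=> e /h_fiber[u -> /andP[_ yu]] ->; rewrite imset_f // inE.
move=> /[dup] eA /h_fiber[u -> /andP[ue _]].
move=> /[dup] e'A /h_fiber[u' -> /andP[u'e' _]].
case=> uu'; have [//|ne] := eqVneq e e'.
move: eA e'A; rewrite !inE => /andP[eE /eqP phi_e] /andP[e'E /eqP phi_e'].
suff : phi @: e != phi @: e' by rewrite phi_e phi_e' eqxx.
by apply: phi_inj => //; apply/set0Pn; exists u; rewrite inE ue uu' u'e'.
Qed.

Lemma local_iso_rho_mul_card_le_eS (V W : finType) (ET : {set {set V}})
    (RT : {set V}) (EF : {set {set W}}) (RF : {set W}) (phi : V -> W)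
    (S : {set W}) :
  local_iso ET RT EF RF phi -> S \subset ~: RF ->
  rho ET RT * #|S|%:R <= (eS EF S)%:R.
Proof.
case=> [[phi_onto phi_RT] phi_edge phi_inj] S_free.
pose U := phi @^-1: S; pose m u := #|[set u' in U | phi u' == phi u]|.
pose A := [set e in ET | phi @: e :&: S != set0].
pose b e : rat :=
  if e \in A then #|[set e' in A | phi @: e' == phi @: e]|%:R^-1 else 0.
have U_free : U \subset ~: RT.
  apply/subsetP => u; rewrite !inE => uS; apply/negP => uRT.
  have := subsetP S_free _ uS.
  by rewrite inE (subsetP phi_RT _ (imset_f phi uRT)).
have fiber_U u : u \in U ->
    [set u' in U | phi u' == phi u] = [set u' | phi u' == phi u].
  by rewrite inE => uS; apply/setP => u'; rewrite !inE andb_idl // => /eqP ->.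
have card_S : #|S|%:R = \sum_(u in U) (m u)%:R^-1 :> rat.
  rewrite /m sum_inv_card_fiber (_ : phi @: U = S) //; apply/setP => y.
  apply/imsetP/idP => [[u uU ->] | yS]; first by rewrite inE in uU.
  by have [u phi_u] := phi_onto y; exists u; rewrite // inE phi_u.
have sum_b_le : \sum_(e in ET) b e <= (eS EF S)%:R.
  rewrite -big_mkcondr /= (eq_bigl (mem A)) => [|e]; last first.
    by rewrite /= !inE andbA andbb.
  rewrite sum_inv_card_fiber ler_nat; apply/subset_leq_card/subsetP => f.
  by case/imsetP => e + ->; rewrite !inE => /andP[/phi_edge-> ->].
rewrite card_S; apply: le_trans sum_b_le; apply: rho_mul_sum_inv_le => //.
- by move=> u uU; apply/card_gt0P; exists u; rewrite inE uU eqxx.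
- by move=> e _; rewrite /b; case: ifP; rewrite ?invr_ge0.
move=> e u eE ue uU; have uS : phi u \in S by rewrite inE in uU.
have eA : e \in A.
  by rewrite inE eE; apply/set0Pn; exists (phi u); rewrite inE imset_f.
rewrite /b eA /m fiber_U // lef_pV2 ?posrE ?ltr0n ?ler_nat.
- apply: card_edge_fiber_le (imset_f phi ue) => e1 e2.
  by rewrite !inE => /andP[e1E _] /andP[e2E _]; apply: phi_inj.
- by apply/card_gt0P; exists u; rewrite inE eqxx.
- by apply/card_gt0P; exists e; rewrite inE eA eqxx.
Qed.

Theorem proposition2p4 (V : finType) (ET : {set {set V}}) (RT : {set V})
    (W : finType) (EF : {set {set W}}) (RF : {set W}) :
  rooted_graph ET RT -> forest ET -> in_L ET RT EF RF ->
  (rho ET RT <= rho EF RF)%R.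
Proof.
move=> _ _ [[_ RF_proper] [phi phi_local_iso]].
have [S [S_n0 S_free ->]] := rho_attained _ EF _ RF_proper.
rewrite /Defs.ratio ler_pdivlMr ?ltr0n ?card_gt0 //.
exact: local_iso_rho_mul_card_le_eS phi_local_iso S_free.
Qed.
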